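(* In the Neutralization-Based Reclamation (NBR) scheme described in the context, a thread can prevent from being reclaimed only the nodes that it reserves in a single operation.
   Context: Setting: an asynchronous shared-memory system with a fixed number of threads operating on a linked concurrent data structure; each unlinked node is retired by exactly one thread. NBR works as follows. Each thread has a private limbo bag of retired nodes, a thread-local flag restartable, and a row of a shared array reservations; each data structure operation reserves a bounded number of nodes, smaller than the limbo bag size threshold. Operations consist of read phases (start from an entry point, read only; restartable set to true at the start after clearing previous reservations) and write phases (entered after writing reservations of all nodes to be accessed in the write phase and setting restartable to false; only reserved nodes are accessed). On a neutralizing signal a thread with restartable true discards its private references and restarts its read phase from a checkpoint; a thread with restartable false ignores the signal. A thread appends each node it retires to its limbo bag; whenever the limbo bag exceeds its threshold, the thread signals all other threads, scans all reservations, and frees every node in its limbo bag that is not reserved. Signals are assumed to be handled by the recipient before it takes any further step once the sender finishes sending. *)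

From mathcomp Require Import all_boot.

Set Implicit Arguments.
Unset Strict Implicit.
Unset Printing Implicit Defensive.

Section NBR.

(* T : the fixed, finite set of threads; N : nodes; threshold : limbo bag
   size threshold. *)
Variables (T : finType) (N : eqType) (threshold : nat).

(* For each thread t:
   - rstb t  : the thread-local flag `restartable`
   - resv t  : the row of the shared array `reservations` owned by t
   - opc t   : number of the operation t is currently executing
               (0 = no operation started yet)
   - bag t   : t's private limbo bag
   - scan t  : None if t is not reclaiming; Some l while t is reclaiming,
               l being the reservation rows (thread, row snapshot) it has
               read so far. *)
Record state := State {
  rstb : T -> bool;
  resv : T -> seq N;
  opc  : T -> nat;
  bag  : T -> seq N;
  scan : T -> option (seq (T * seq N))
}.

Definition upd (A : Type) (f : T -> A) (t : T) (v : A) : T -> A :=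
  fun u => if u == t then v else f u.

Inductive action :=
| BeginOp    of T        (* start a new operation (begins with a read phase) *)
| StartRead  of T        (* start a further read phase of the current operation *)
| Reserve    of T & N
| StartWrite of T
| Retire     of T & N
| Signal     of T        (* limbo bag over threshold: neutralize all others *)
| ScanRow    of T & T
| Free       of T.       (* reclaimer frees all unreserved nodes of its bag *)

Inductive step : state -> action -> state -> Prop :=
| st_begin s t :
    scan s t = None ->
    step s (BeginOp t)
      (State (upd (rstb s) t true) (upd (resv s) t [::])
             (upd (opc s) t (opc s t).+1) (bag s) (scan s))
| st_read s t :
    scan s t = None -> 0 < opc s t ->
    step s (StartRead t)
      (State (upd (rstb s) t true) (upd (resv s) t [::])
             (opc s) (bag s) (scan s))
| st_reserve s t x :
    scan s t = None -> 0 < opc s t -> rstb s t = true ->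
    step s (Reserve t x)
      (State (rstb s) (upd (resv s) t (x :: resv s t))
             (opc s) (bag s) (scan s))
| st_write s t :
    scan s t = None -> 0 < opc s t -> rstb s t = true ->
    step s (StartWrite t)
      (State (upd (rstb s) t false) (resv s) (opc s) (bag s) (scan s))
| st_retire s t x :
    scan s t = None -> 0 < opc s t -> rstb s t = false ->
    step s (Retire t x)
      (State (rstb s) (resv s) (opc s) (upd (bag s) t (rcons (bag s t) x))
             (scan s))
| st_signal s r :
    (* signals are handled by every recipient before it takes another step:
       restartable recipients restart their read phase (clearing their
       reservations, restartable stays true); the others ignore it *)
    scan s r = None -> rstb s r = false -> threshold < size (bag s r) ->
    step s (Signal r)
      (State (rstb s)
             (fun u => if (u != r) && rstb s u then [::] else resv s u)
             (opc s) (bag s) (upd (scan s) r (Some [::])))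
| st_scanrow s r t l :
    scan s r = Some l -> t \notin unzip1 l ->
    step s (ScanRow r t)
      (State (rstb s) (resv s) (opc s) (bag s)
             (upd (scan s) r (Some ((t, resv s t) :: l))))
| st_free s r l :
    scan s r = Some l -> (forall t, t \in unzip1 l) ->
    step s (Free r)
      (State (rstb s) (resv s) (opc s)
             (upd (bag s) r [seq x <- bag s r | has (fun p => x \in p.2) l])
             (upd (scan s) r None)).

Definition init : state :=
  State (fun _ => true) (fun _ => [::]) (fun _ => 0) (fun _ => [::])
        (fun _ => None).

Definition execution (s : nat -> state) (a : nat -> action) (m : nat) : Prop :=
  s 0 = init /\ forall j, j < m -> step (s j) (a j) (s j.+1).

Definition reserved_in_op (s : nat -> state) (a : nat -> action)
    (t : T) (k : nat) (i : nat) (x : N) : Prop :=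
  exists j, j < i /\ a j = Reserve t x /\ opc (s j) t = k.

Definition prevents (s : nat -> state) (i : nat) (r t : T) (x : N) : Prop :=
  exists l, scan (s i) r = Some l /\ x \in bag (s i) r /\
    exists row, (t, row) \in l /\ x \in row.

End NBR.

From mathcomp Require Import all_boot.

(* A thread's reservation row is emptied whenever it starts an operation, and
   the operation counter only changes then, so at every moment every node in
   the row was reserved during the thread's current operation.  A reclaimer
   reads each row exactly once, as a snapshot of an earlier state; hence all
   nodes a thread t protects from a free step come from the single operation
   t was running when its row was read. *)

Set Implicit Arguments.
Unset Strict Implicit.
Unset Printing Implicit Defensive.

Lemma uniq_map_inj_in (A B : eqType) (f : A -> B) (s : seq A) :
  uniq (map f s) -> {in s &, injective f}.
Proof.
elim: s => //= x s IHs /andP[fx_notin /IHs inj_s] y z.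
rewrite !inE => /predU1P[-> | ys] /predU1P[-> | zs] // fyz.
- by case/negP: fx_notin; rewrite fyz map_f.
- by case/negP: fx_notin; rewrite -fyz map_f.
- exact: inj_s.
Qed.

Section Model.
Variables (T : finType) (N : eqType) (threshold : nat).

Lemma step_resv (s s' : state T N) (e : action T N) (t : T) (x : N) :
  step threshold s e s' -> x \in resv s' t ->
  opc s' t = opc s t /\ (x \in resv s t \/ e = Reserve t x).
Proof.
case=> [s0 u _|s0 u _ _|s0 u y _ _ _|s0 u _ _ _|s0 u y _ _ _|s0 r _ _ _
       |s0 r u l _ _|s0 r l _ _] /=; rewrite /upd.
- by case: eqP => // _ x_in; split; last left.
- by case: eqP => // _ x_in; split; last left.
- case: eqP => [->|_] x_in; split=> //; last by left.
  by move: x_in; rewrite inE => /predU1P[->|]; [right|left].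
- by move=> x_in; split; last left.
- by move=> x_in; split; last left.
- by case: ifP => // _ x_in; split; last left.
- by move=> x_in; split; last left.
- by move=> x_in; split; last left.
Qed.

Lemma step_scan (s s' : state T N) (e : action T N) (r : T) (l' : seq (T * seq N)) :
  step threshold s e s' -> scan s' r = Some l' ->
  l' = [::] \/ exists2 l, scan s r = Some l &
    l' = l \/ exists2 t, t \notin unzip1 l & l' = (t, resv s t) :: l.
Proof.
case=> [s0 u _|s0 u _ _|s0 u y _ _ _|s0 u _ _ _|s0 u y _ _ _|s0 r0 _ _ _
       |s0 r0 u l scan_r0 u_notin|s0 r0 l _ _] /=; rewrite /upd;
  try by right; exists l'; last left.
- by case: eqP => [_ [<-]|_ scan_r]; [left | right; exists l'; last left].
- case: eqP => [-> [<-]|_ scan_r]; right; last by exists l'; last left.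
  by exists l => //; right; exists u.
- by case: eqP => // _ scan_r; right; exists l'; last left.
Qed.

Lemma reserved_in_op_mono (s : nat -> state T N) (a : nat -> action T N) t k i i' x :
  i <= i' -> reserved_in_op s a t k i x -> reserved_in_op s a t k i' x.
Proof. by move=> le_ii' [j [lt_ji a_j]]; exists j; split=> //; exact: leq_trans le_ii'. Qed.

Section Execution.
Variables (s : nat -> state T N) (a : nat -> action T N) (m : nat).
Hypothesis exec : execution threshold s a m.

Lemma resv_reserved_in_current_op j t x :
  j <= m -> x \in resv (s j) t -> reserved_in_op s a t (opc (s j) t) j x.
Proof.
case: exec => s0_init step_s.
elim: j t x => [|j IHj] t x le_jm; first by rewrite s0_init.
case/(step_resv (step_s j le_jm)) => -> [/(IHj _ _ (ltnW le_jm)) | a_j].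
- exact: reserved_in_op_mono.
- by exists j.
Qed.

Lemma scan_snapshot j r l : j <= m -> scan (s j) r = Some l ->
  uniq (unzip1 l) /\ {in l, forall p, exists2 j0, j0 < j & p.2 = resv (s j0) p.1}.
Proof.
case: exec => s0_init step_s.
elim: j l => [|j IHj] l le_jm; first by rewrite s0_init.
case/(step_scan (step_s j le_jm)) => [-> | [l0 /(IHj _ (ltnW le_jm)) [uniq_l0 snap_l0]]].
  by split.
have snap_l0' : {in l0, forall p, exists2 j0, j0 < j.+1 & p.2 = resv (s j0) p.1}.
  by move=> p /snap_l0 [j0 lt_j0j ->]; exists j0 => //; exact: ltnW.
case=> [-> // | [t t_notin ->]]; split; first by rewrite /= t_notin.
by move=> p; rewrite inE => /predU1P[-> | /snap_l0']; first exists j.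
Qed.

Lemma scanned_row_reserved_in_one_op i r t :
  i <= m -> exists k, forall x, prevents s i r t x -> reserved_in_op s a t k i x.
Proof.
move=> le_im.
case scan_r: (scan (s i) r) => [l|]; last first.
  by exists 0 => x [l' [scan_r' _]]; rewrite scan_r in scan_r'.
have [uniq_l snap_l] := scan_snapshot le_im scan_r.
have [/mapP[[t' row] row_in /= ->] | t_notin] := boolP (t \in unzip1 l); last first.
  exists 0 => x [l' [scan_r' [_ [row [row_in _]]]]].
  move: scan_r' row_in; rewrite scan_r => -[<-] row_in.
  by case/negP: t_notin; apply/mapP; exists (t, row).
have [j0 lt_j0i /= row_eq] := snap_l _ row_in.
exists (opc (s j0) t') => x [l' [scan_r' [_ [row' [row'_in x_in]]]]].
move: scan_r' row'_in; rewrite scan_r => -[<-] row'_in.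
case: (uniq_map_inj_in uniq_l row'_in row_in erefl) => row'_eq.
rewrite row'_eq row_eq in x_in.
apply: reserved_in_op_mono (ltnW lt_j0i) _.
exact: resv_reserved_in_current_op (leq_trans (ltnW lt_j0i) le_im) x_in.
Qed.

End Execution.
End Model.

Theorem corollary8 (T : finType) (N : eqType) (threshold : nat)
    (s : nat -> state T N) (a : nat -> action T N) (m : nat) :
  execution threshold s a m ->
  forall (i : nat) (r t : T), i < m -> a i = @Free T N r ->
  exists k : nat, forall x : N, prevents s i r t x -> reserved_in_op s a t k i x.
Proof.
move=> exec i r t /ltnW le_im _.
exact (scanned_row_reserved_in_one_op exec r t le_im).
Qed.
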